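(* Let $N=3$ and suppose $$\kappa>\frac{\sqrt{138+22\sqrt{33}}}{4}\,D(\Omega)\ (\approx4.0649\,D(\Omega)).$$ Then for every initial datum $\Theta^0\in\mathbb{R}^3$, the solution of the three-oscillator Kuramoto model $\dot\theta_i=\nu_i+\frac\kappa3\sum_{j=1}^3\sin(\theta_j-\theta_i)$, $i=1,2,3$, exhibits complete phase-locking.
   Context: $D(\Omega)=\max_{i,j}|\nu_i-\nu_j|$ for $\Omega=(\nu_1,\nu_2,\nu_3)$. Complete phase-locking: $\lim_{t\to\infty}(\theta_i(t)-\theta_j(t))$ exists for all $i,j$. *)

From Stdlib Require Import Reals.
From Coquelicot Require Import Coquelicot.
Open Scope R_scope.

(* Oscillators are indexed by 0, 1, 2 (i.e. i < 3). *)

Definition D3 (nu : nat -> R) : R :=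
  Rmax (Rmax (Rabs (nu 0%nat - nu 1%nat)) (Rabs (nu 0%nat - nu 2%nat)))
       (Rabs (nu 1%nat - nu 2%nat)).

Definition kuramoto3_rhs (kappa : R) (nu : nat -> R) (x : nat -> R) (i : nat) : R :=
  nu i + kappa / 3 * (sin (x 0%nat - x i) + sin (x 1%nat - x i) + sin (x 2%nat - x i)).

Definition kuramoto3_solution (kappa : R) (nu : nat -> R) (Theta0 : nat -> R)
  (theta : nat -> R -> R) : Prop :=
  (forall i, (i < 3)%nat -> theta i 0 = Theta0 i) /\
  (forall i, (i < 3)%nat -> filterlim (theta i) (at_right 0) (locally (theta i 0))) /\
  (forall i t, (i < 3)%nat -> 0 < t ->
     is_derive (theta i) t (kuramoto3_rhs kappa nu (fun j => theta j t) i)).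

Definition complete_phase_locking (theta : nat -> R -> R) : Prop :=
  forall i j, (i < 3)%nat -> (j < 3)%nat ->
    ex_finite_lim (fun t => theta i t - theta j t) p_infty.

From Stdlib Require Import Reals Lra Lia Classical.
From Coquelicot Require Import Coquelicot.
Open Scope R_scope.

(* Write a = theta1 - theta0 and b = theta2 - theta0.  The hypothesis on kappa says exactly that every
      frequency gap nu_i - nu_j is below (2/3) kappa sin y0 (2 cos y0 - 1),
      where y0 = arccos ((1 + sqrt 33) / 8) (optimal_angle).  For h = y0 + 2n pi
      large, theta_i - theta_j decreases whenever it equals 2h
      (coupling_gap), so a barrier argument keeps it below 2h forever.
   2. Frequency synchronisation.  The flow is a gradient flow: the potential
      V decreases at rate sum_i (omega_i - mean frequency)^2 and is bounded
      below once the differences are bounded; as the frequencies omega_i are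
      uniformly Lipschitz, each omega_i tends to the mean frequency.
   3. Phase-locking.  Hence sin a + sin b -> p and sin (b - a) - sin a -> q.
      Eliminating b, every value c taken by a at arbitrarily late times is a
      root of the resolvent H(p, q, .).  If a did not converge it would, by
      continuity, take every value of a nontrivial interval arbitrarily late;
      but H(p, q, .) cannot vanish on an interval, because its cosine
      eliminant is a sextic with leading coefficient 4.  So a converges, and
      symmetrically b, which gives complete phase-locking. *)

Definition tends_to (f : R -> R) (l : R) : Prop :=
  forall eps, 0 < eps -> exists T, forall t, T <= t -> Rabs (f t - l) < eps.

Lemma tends_to_is_lim f l : tends_to f l -> is_lim f p_infty l.
Proof.
  intros Hf. apply is_lim_spec. intros eps.
  destruct (Hf eps (cond_pos eps)) as [T HT]. exists T. intros t Ht. apply HT. lra.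
Qed.

Lemma tends_to_ext f g l :
  (forall t, 1 <= t -> f t = g t) -> tends_to f l -> tends_to g l.
Proof.
  intros Hfg Hf eps Heps. destruct (Hf eps Heps) as [T HT].
  exists (Rmax T 1). intros t Ht.
  rewrite <- Hfg by (eapply Rle_trans; [apply Rmax_r | exact Ht]).
  apply HT. eapply Rle_trans; [apply Rmax_l | exact Ht].
Qed.

Lemma tends_to_const c : tends_to (fun _ => c) c.
Proof. intros eps Heps. exists 0. intros. rewrite Rminus_diag, Rabs_R0. lra. Qed.

Lemma tends_to_minus f g l m :
  tends_to f l -> tends_to g m -> tends_to (fun t => f t - g t) (l - m).
Proof.
  intros Hf Hg eps Heps.
  destruct (Hf (eps / 2)) as [T1 H1]; [lra |]. destruct (Hg (eps / 2)) as [T2 H2]; [lra |].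
  exists (Rmax T1 T2). intros t Ht.
  pose proof (H1 t (Rle_trans _ _ _ (Rmax_l _ _) Ht)).
  pose proof (H2 t (Rle_trans _ _ _ (Rmax_r _ _) Ht)).
  replace (f t - g t - (l - m)) with ((f t - l) + - (g t - m)) by ring.
  eapply Rle_lt_trans; [apply Rabs_triang |]. rewrite Rabs_Ropp. lra.
Qed.

Lemma tends_to_affine f l c d :
  tends_to f l -> tends_to (fun t => c * f t + d) (c * l + d).
Proof.
  intros Hf eps Heps.
  assert (Hc : 0 < Rabs c + 1) by (pose proof (Rabs_pos c); lra).
  destruct (Hf (eps / (Rabs c + 1))) as [T HT]; [apply Rdiv_lt_0_compat; lra |].
  exists T. intros t Ht. specialize (HT t Ht).
  replace (c * f t + d - (c * l + d)) with (c * (f t - l)) by ring.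
  rewrite Rabs_mult.
  apply (Rmult_lt_compat_r (Rabs c + 1)) in HT; [| lra].
  replace (eps / (Rabs c + 1) * (Rabs c + 1)) with eps in HT by (field; lra).
  pose proof (Rabs_pos c). pose proof (Rabs_pos (f t - l)). nra.
Qed.

Lemma cauchy_tends_to f :
  (forall eps, 0 < eps -> exists T, forall s t, T <= s -> T <= t -> Rabs (f s - f t) < eps) ->
  exists l, tends_to f l.
Proof.
  intros Hc.
  assert (HN : forall T, exists N : nat, T <= INR N).
  { intros T. destruct (INR_archimed 1 T) as [N HN]; [lra |]. exists N. lra. }
  assert (Hseq : ex_lim_seq_cauchy (fun n => f (INR n))).
  { intros eps. destruct (Hc eps (cond_pos eps)) as [T HT]. destruct (HN T) as [N HTN].
    exists N. intros n m Hn Hm.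
    apply HT; eapply Rle_trans; try exact HTN; apply le_INR; assumption. }
  apply ex_lim_seq_cauchy_corr in Hseq. destruct Hseq as [l Hl].
  apply is_lim_seq_spec in Hl.
  exists l. intros eps Heps.
  destruct (Hl (mkposreal (eps / 2) ltac:(lra))) as [N1 HN1].
  destruct (Hc (eps / 2)) as [T HT]; [lra |].
  destruct (HN (Rmax T (INR N1))) as [n Hn].
  exists T. intros t Ht.
  assert (HnN1 : (N1 <= n)%nat) by (apply INR_le; eapply Rle_trans; [apply Rmax_r | exact Hn]).
  specialize (HN1 n HnN1). simpl in HN1.
  assert (Rabs (f t - f (INR n)) < eps / 2)
    by (apply HT; [exact Ht | eapply Rle_trans; [apply Rmax_l | exact Hn]]).
  replace (f t - l) with ((f t - f (INR n)) + (f (INR n) - l)) by ring.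
  eapply Rle_lt_trans; [apply Rabs_triang |]. lra.
Qed.

Lemma no_limit_oscillates f :
  ~ (exists l, tends_to f l) ->
  exists eps, 0 < eps /\ forall T, exists s t, T <= s /\ T <= t /\ f s + eps <= f t.
Proof.
  intros Hnl. apply NNPP. intros Hosc. apply Hnl, cauchy_tends_to. intros eps Heps.
  apply NNPP. intros HnT. apply Hosc. exists eps. split; [exact Heps |]. intros T.
  apply NNPP. intros Hn. apply HnT. exists T. intros s t Hs Ht.
  apply Rnot_le_lt. intros Hle. apply Hn.
  destruct (Rle_dec (f s) (f t)).
  - exists s, t. rewrite Rabs_left1 in Hle by lra. repeat split; auto; lra.
  - exists t, s. rewrite Rabs_right in Hle by lra. repeat split; auto; lra.
Qed.

Lemma not_tends_to_deviates f l :
  ~ tends_to f l -> exists eps, 0 < eps /\ forall T, exists t, T <= t /\ eps <= Rabs (f t - l).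
Proof.
  intros Hnl. apply NNPP. intros Hdev. apply Hnl. intros eps Heps.
  apply NNPP. intros HnT. apply Hdev. exists eps. split; [exact Heps |]. intros T.
  apply NNPP. intros Hn. apply HnT. exists T. intros t Ht.
  apply Rnot_le_lt. intros Hle. apply Hn. exists t. split; assumption.
Qed.

Lemma derive_continuity_pt f x l : is_derive f x l -> continuity_pt f x.
Proof.
  intros H. apply continuity_pt_filterlim, (ex_derive_continuous f x). exists l; exact H.
Qed.

Lemma continuity_pt_below f x L : continuity_pt f x -> f x < L ->
  exists d, 0 < d /\ forall y, Rabs (y - x) < d -> f y < L.
Proof.
  intros H HL. destruct (H (L - f x)) as [d [Hd Hdf]]; [lra |].
  exists d. split; [exact Hd |]. intros y Hy. destruct (Req_dec x y) as [<- | Hne]; [exact HL |].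
  assert (Hfy : Rabs (f y - f x) < L - f x) by (apply Hdf; split; [split; [exact I | exact Hne] | exact Hy]).
  apply Rabs_def2 in Hfy. lra.
Qed.

Lemma continuity_pt_above f x L : continuity_pt f x -> L < f x ->
  exists d, 0 < d /\ forall y, Rabs (y - x) < d -> L < f y.
Proof.
  intros H HL. destruct (continuity_pt_below (fun y => - f y) x (- L)) as [d [Hd Hdf]].
  - apply continuity_pt_opp, H.
  - lra.
  - exists d. split; [exact Hd |]. intros y Hy. specialize (Hdf y Hy). simpl in Hdf. lra.
Qed.

Lemma deriv_neg_left f x l : is_derive f x l -> l < 0 ->
  exists d, 0 < d /\ forall u, x - d < u < x -> f x < f u.
Proof.
  intros H Hl. apply is_derive_Reals in H.
  destruct (H (- l / 2)) as [d Hd]; [lra |].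
  exists d. split; [apply cond_pos |]. intros u Hu.
  assert (Hux : Rabs (u - x) < d) by (rewrite Rabs_left; lra).
  specialize (Hd (u - x) ltac:(lra) Hux). replace (x + (u - x)) with u in Hd by ring.
  apply Rabs_def2 in Hd.
  set (q := (f u - f x) / (u - x)) in *.
  assert (f u - f x = q * (u - x)) by (unfold q; field; lra).
  nra.
Qed.

Lemma ivt_between f x y c : x <= y -> (forall z, x <= z <= y -> continuity_pt f z) ->
  (f x <= c <= f y \/ f y <= c <= f x) -> exists z, x <= z <= y /\ f z = c.
Proof.
  assert (Hincr : forall g d, x <= y -> (forall z, x <= z <= y -> continuity_pt g z) ->
            g x <= d <= g y -> exists z, x <= z <= y /\ g z = d).
  { intros g d Hxy Hg Hd.
    destruct (Req_dec (g x) d) as [E | Hx]; [exists x; split; [lra | exact E] |].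
    destruct (Req_dec (g y) d) as [E | Hy]; [exists y; split; [lra | exact E] |].
    destruct (Ranalysis5.IVT_interv (fun z => g z - d) x y) as [z [Hz Hgz]].
    - intros z Hz. apply continuity_pt_minus; [apply Hg; exact Hz | apply continuity_pt_const; now intros ? ?].
    - destruct Hxy as [| ->]; [assumption | lra].
    - lra.
    - lra.
    - exists z. split; [exact Hz | lra]. }
  intros Hxy Hf [Hc | Hc].
  - exact (Hincr f c Hxy Hf Hc).
  - destruct (Hincr (fun z => - f z) (- c) Hxy) as [z [Hz Hfz]].
    + intros z Hz. apply continuity_pt_opp, Hf, Hz.
    + lra.
    + exists z. split; [exact Hz | lra].
Qed.

Lemma below_extends f a x b L : x < b -> continuity_pt f x ->
  (forall u, a <= u <= x -> f u < L) -> a <= x ->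
  exists x', x < x' <= b /\ forall u, a <= u <= x' -> f u < L.
Proof.
  intros Hxb Hc Hbelow Hax.
  destruct (continuity_pt_below f x L Hc (Hbelow x ltac:(lra))) as [d [Hd Hnear]].
  exists (x + Rmin d (b - x) / 2).
  assert (0 < Rmin d (b - x)) by (apply Rmin_pos; lra).
  pose proof (Rmin_l d (b - x)). pose proof (Rmin_r d (b - x)).
  split; [lra |]. intros u Hu.
  destruct (Rle_dec u x); [apply Hbelow; lra |]. apply Hnear. rewrite Rabs_right; lra.
Qed.

Lemma first_crossing f a b L : a <= b ->
  (forall t, a <= t <= b -> continuity_pt f t) -> f a < L -> L <= f b ->
  exists s, a < s <= b /\ f s = L /\ forall u, a <= u < s -> f u < L.
Proof.
  intros Hab Hc Ha Hb.
  set (E := fun s => a <= s <= b /\ forall u, a <= u <= s -> f u < L).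
  assert (HEa : E a) by (split; [lra | intros u Hu; replace u with a by lra; exact Ha]).
  assert (HEb : bound E) by (exists b; intros s [Hs _]; lra).
  destruct (completeness E HEb (ex_intro _ a HEa)) as [s [Hub Hlub]].
  assert (Has : a <= s) by (apply Hub, HEa).
  assert (Hsb : s <= b) by (apply Hlub; intros x [Hx _]; lra).
  assert (Hbelow : forall u, a <= u < s -> f u < L).
  { intros u Hu. apply NNPP. intros Hfu.
    assert (s <= u); [| lra].
    apply Hlub. intros x [Hx Hxf]. apply Rnot_lt_le. intros Hux. apply Hfu, Hxf. lra. }
  assert (Hmax : forall x, s <= x < b -> a <= x -> ~ (forall u, a <= u <= x -> f u < L)).
  { intros x Hx Hax Hx_below.
    destruct (below_extends f a x b L ltac:(lra) (Hc x ltac:(lra)) Hx_below Hax) as [x' [Hx' Hx'_below]].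
    assert (x' <= s) by (apply Hub; split; [lra | exact Hx'_below]). lra. }
  assert (Has' : a < s).
  { destruct Has as [| <-]; [assumption | exfalso].
    apply (Hmax a); [destruct Hab as [| <-]; lra | lra |].
    intros u Hu. replace u with a by lra. exact Ha. }
  exists s. split; [lra | split; [| exact Hbelow]].
  destruct (Rtotal_order (f s) L) as [Hlt | [Heq | Hgt]]; [exfalso | exact Heq | exfalso].
  - (* f < L on [a, s], and s < b since L <= f b *)
    apply (Hmax s); [destruct Hsb as [| ->]; lra | lra |].
    intros u Hu. destruct (Rle_lt_or_eq _ _ (proj2 Hu)) as [| ->]; [apply Hbelow; lra | exact Hlt].
  - (* f exceeds L a little before s, contradicting f < L on [a, s) *)
    destruct (continuity_pt_above f s L (Hc s ltac:(lra)) Hgt) as [d [Hd Hnear]].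
    set (u := s - Rmin d (s - a) / 2).
    assert (0 < Rmin d (s - a)) by (apply Rmin_pos; lra).
    pose proof (Rmin_l d (s - a)). pose proof (Rmin_r d (s - a)).
    assert (L < f u) by (apply Hnear; rewrite Rabs_left; unfold u; lra).
    assert (f u < L) by (apply Hbelow; unfold u; lra). lra.
Qed.

Lemma barrier (f df : R -> R) (L : R) :
  (forall t, 0 < t -> is_derive f t (df t)) -> f 1 < L ->
  (forall t, 0 < t -> f t = L -> df t < 0) -> forall t, 1 <= t -> f t < L.
Proof.
  intros Hd H1 Hneg t Ht. apply Rnot_le_lt. intros Hft.
  destruct (first_crossing f 1 t L Ht) as [s [Hs [Hfs Hbelow]]]; try assumption.
  { intros u Hu. apply (derive_continuity_pt f u (df u)), Hd. lra. }
  destruct (deriv_neg_left f s (df s)) as [d [Hd0 Hleft]].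
  - apply Hd. lra.
  - apply Hneg; [lra | exact Hfs].
  - set (u := s - Rmin d (s - 1) / 2).
    assert (0 < Rmin d (s - 1)) by (apply Rmin_pos; lra).
    pose proof (Rmin_l d (s - 1)). pose proof (Rmin_r d (s - 1)).
    assert (f s < f u) by (apply Hleft; unfold u; lra).
    assert (f u < L) by (apply Hbelow; unfold u; lra). lra.
Qed.

Lemma mvt_pos f df a b : 0 < a -> a <= b -> (forall t, 0 < t -> is_derive f t (df t)) ->
  exists c, a <= c <= b /\ f b - f a = df c * (b - a).
Proof.
  intros Ha Hab Hd.
  destruct (MVT_gen f a b df) as [c [Hc Heq]].
  - intros x Hx. apply Hd. rewrite Rmin_left in Hx by lra. lra.
  - intros x Hx. apply (derive_continuity_pt f x (df x)), Hd. rewrite Rmin_left in Hx by lra. lra.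
  - exists c. rewrite Rmin_left, Rmax_right in Hc by lra. split; assumption.
Qed.

Lemma pigeonhole_cofinal (P : nat -> R -> Prop) N :
  (forall k T T', T' <= T -> P k T -> P k T') ->
  (forall T, exists k, (k <= N)%nat /\ P k T) -> exists k, (k <= N)%nat /\ forall T, P k T.
Proof.
  revert P. induction N as [| N IH]; intros P Hmon HP.
  - exists 0%nat. split; [lia |]. intros T. destruct (HP T) as [k [Hk Pk]].
    replace k with 0%nat in Pk by lia. exact Pk.
  - destruct (classic (forall T, P (S N) T)) as [Hall | Hn]; [exists (S N); split; auto |].
    apply not_all_ex_not in Hn. destruct Hn as [T0 HT0].
    destruct (IH (fun k T => P k (Rmax T T0))) as [k [Hk Pk]].
    + intros k T T' HTT'. apply Hmon. apply Rmax_le_compat; lra.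
    + intros T. destruct (HP (Rmax T T0)) as [k [Hk Pk]].
      destruct (Nat.eq_dec k (S N)) as [-> | Hne].
      * exfalso. apply HT0. apply (Hmon _ (Rmax T T0)); [apply Rmax_r | exact Pk].
      * exists k. split; [lia | exact Pk].
    + exists k. split; [lia |]. intros T. apply (Hmon k (Rmax T T0)); [apply Rmax_l | apply Pk].
Qed.

Lemma grid_point lo w x (N : nat) : 0 < w -> lo <= x <= lo + INR N * w ->
  exists k, (k <= S N)%nat /\ x <= lo + INR k * w <= x + w.
Proof.
  intros Hw Hx.
  assert (Hz : 0 <= (x - lo) / w) by (apply Rdiv_le_0_compat; lra).
  destruct (nfloor_ex _ Hz) as [n [Hn1 Hn2]].
  assert (Hxw : (x - lo) / w * w = x - lo) by (field; lra).
  exists (S n). rewrite S_INR. split.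
  - apply le_n_S, INR_le. apply (Rmult_le_reg_r w); [exact Hw |].
    apply (Rmult_le_compat_r w) in Hn1; lra.
  - apply (Rmult_le_compat_r w) in Hn1; [| lra].
    apply (Rmult_lt_compat_r w) in Hn2; [| lra]. nra.
Qed.

Lemma vanishing_derivative (f g : R -> R) a b : (forall x, a < x < b -> f x = 0) ->
  (forall x, a < x < b -> is_derive f x (g x)) -> forall x, a < x < b -> g x = 0.
Proof.
  intros Hz Hd x Hx.
  assert (Hp : 0 < Rmin (x - a) (b - x)) by (apply Rmin_pos; lra).
  assert (Hloc : locally x (fun t => 0 = f t)).
  { exists (mkposreal _ Hp). intros y Hy. symmetry; apply Hz.
    change (Rabs (y - x) < Rmin (x - a) (b - x)) in Hy.
    pose proof (Rmin_l (x - a) (b - x)). pose proof (Rmin_r (x - a) (b - x)).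
    apply Rabs_def2 in Hy. lra. }
  pose proof (is_derive_ext_loc _ _ _ _ Hloc (is_derive_const 0 x)) as H0.
  rewrite <- (is_derive_unique _ _ _ (Hd x Hx)). exact (is_derive_unique _ _ _ H0).
Qed.

(* A polynomial of degree 6 with leading coefficient 4 does not vanish on a
   nontrivial interval: its sixth derivative is the constant 2880. *)
Lemma sextic_not_vanishing a b c0 c1 c2 c3 c4 c5 : a < b ->
  ~ (forall x, a < x < b -> 4*x^6 + c5*x^5 + c4*x^4 + c3*x^3 + c2*x^2 + c1*x + c0 = 0).
Proof.
  intros Hab Hz.
  pose proof (vanishing_derivative _ (fun x => 24*x^5 + 5*c5*x^4 + 4*c4*x^3 + 3*c3*x^2 + 2*c2*x + c1) a b Hz
    ltac:(intros; auto_derive; [exact I | ring])) as H1.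
  pose proof (vanishing_derivative _ (fun x => 120*x^4 + 20*c5*x^3 + 12*c4*x^2 + 6*c3*x + 2*c2) a b H1
    ltac:(intros; auto_derive; [exact I | ring])) as H2.
  pose proof (vanishing_derivative _ (fun x => 480*x^3 + 60*c5*x^2 + 24*c4*x + 6*c3) a b H2
    ltac:(intros; auto_derive; [exact I | ring])) as H3.
  pose proof (vanishing_derivative _ (fun x => 1440*x^2 + 120*c5*x + 24*c4) a b H3
    ltac:(intros; auto_derive; [exact I | ring])) as H4.
  pose proof (vanishing_derivative _ (fun x => 2880*x + 120*c5) a b H4
    ltac:(intros; auto_derive; [exact I | ring])) as H5.
  pose proof (vanishing_derivative _ (fun _ => 2880) a b H5
    ltac:(intros; auto_derive; [exact I | ring])) as H6.
  specialize (H6 ((a + b) / 2)). lra.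
Qed.

Lemma cos_not_constant a b : a < b ->
  exists c1 c2, a <= c1 <= b /\ a <= c2 <= b /\ cos c1 <> cos c2.
Proof.
  intros Hab. apply NNPP. intros Hn.
  assert (Hc : forall c, a < c < b -> cos c - cos a = 0).
  { intros c Hc. apply NNPP. intros Hne. apply Hn. exists c, a. repeat split; lra. }
  pose proof (vanishing_derivative _ (fun c => - sin c) a b Hc
    ltac:(intros; auto_derive; [exact I | ring])) as Hsin.
  assert (Hsin' : forall c, a < c < b -> sin c = 0) by (intros c Hc'; specialize (Hsin c Hc'); lra).
  pose proof (vanishing_derivative _ cos a b Hsin'
    ltac:(intros; auto_derive; [exact I | ring])) as Hcos.
  assert (Hm : a < (a + b) / 2 < b) by lra.
  pose proof (sin2_cos2 ((a + b) / 2)) as E. unfold Rsqr in E.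
  rewrite (Hsin' _ Hm), (Hcos _ Hm) in E. lra.
Qed.

(* The resolvent H(p, q, c) eliminates b from p = sin c + sin b and
   q = sin (b - c) - sin c (see resolvent_vanishes). *)
Definition resolvent (p q c : R) : R :=
  (p * cos c - q)^2 - 2 * sin c * (cos c + 1) * (p - q) + (sin c)^2 * (2 * cos c + 1 + p^2).

Lemma resolvent_vanishes a b : resolvent (sin a + sin b) (sin (b - a) - sin a) a = 0.
Proof.
  unfold resolvent. rewrite sin_minus.
  pose proof (sin2_cos2 a) as Ea. pose proof (sin2_cos2 b) as Eb. unfold Rsqr in Ea, Eb.
  transitivity ((sin a * sin a + 2 * sin a * sin b) * (sin a * sin a + cos a * cos a - 1)
                + sin a * sin a * (sin b * sin b + cos b * cos b - 1)); [ring |].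
  rewrite Ea, Eb. ring.
Qed.

(* For fixed p, q the resolvent cannot vanish on an interval of angles:
   with x = cos c, s = sin c, H = A(x) + s B(x) where A, B are polynomials,
   and H = 0 forces A^2 - (1 - x^2) B^2 = 0, a sextic in x with leading
   coefficient 4, while x ranges over a nontrivial interval. *)
Lemma resolvent_not_vanishing p q g w : 0 < w ->
  ~ (forall c, g <= c <= g + w -> resolvent p q c = 0).
Proof.
  intros Hw Hz.
  destruct (cos_not_constant g (g + w)) as [c1 [c2 [Hc1 [Hc2 Hne]]]]; [lra |].
  set (lo := Rmin (cos c1) (cos c2)). set (hi := Rmax (cos c1) (cos c2)).
  assert (Hlohi : lo < hi) by (unfold lo, hi, Rmin, Rmax; destruct (Rle_dec (cos c1) (cos c2)); lra).
  set (al := 2 - 2*p*q). set (be := 1 + p^2 + q^2). set (ga := 4*(p - q)^2).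
  apply (sextic_not_vanishing lo hi (be^2 - ga) (2*al*be - 2*ga) (al^2 - 2*be)
           (-4*be - 2*al + 2*ga) (1 - 4*al + ga) 4 Hlohi).
  intros x Hx.
  destruct (IVT_gen cos c1 c2 x continuity_cos) as [c [Hc Hcx]]; [unfold lo, hi in Hx; lra |].
  assert (Hgc : g <= c <= g + w) by (unfold Rmin, Rmax in Hc; destruct (Rle_dec c1 c2); lra).
  specialize (Hz c Hgc). unfold resolvent in Hz. rewrite Hcx in Hz.
  pose proof (sin2_cos2 c) as E. unfold Rsqr in E. rewrite Hcx in E.
  set (s := sin c) in *.
  set (A := (p*x - q)^2 + (1 - x^2)*(2*x + 1 + p^2)).
  set (B := -2*(x + 1)*(p - q)).
  assert (HAB : A = - s * B) by (unfold A, B; replace (1 - x^2) with (s*s) by lra; lra).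
  assert (HP : A^2 - (1 - x^2) * B^2 = 0)
    by (rewrite HAB; replace (1 - x^2) with (s*s) by lra; ring).
  rewrite <- HP. unfold A, B, al, be, ga. ring.
Qed.

Lemma quadratic_perturbation A B C D E e1 e2 d : d <= 1 -> Rabs e1 <= d -> Rabs e2 <= d ->
  Rabs (e1*A + e2*B + e1*e1*C + e1*e2*D + e2*e2*E)
  <= d * (Rabs A + Rabs B + Rabs C + Rabs D + Rabs E).
Proof.
  intros Hd H1 H2.
  pose proof (Rabs_pos e1). pose proof (Rabs_pos e2).
  assert (Hterm : forall u v X, Rabs u <= d -> Rabs v <= 1 -> Rabs (u * v * X) <= d * Rabs X).
  { intros u v X Hu Hv. rewrite !Rabs_mult. pose proof (Rabs_pos u). pose proof (Rabs_pos v).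
    pose proof (Rabs_pos X). apply Rmult_le_compat_r; [lra | nra]. }
  assert (Hlin : forall u X, Rabs u <= d -> Rabs (u * X) <= d * Rabs X).
  { intros u X Hu. rewrite Rabs_mult. apply Rmult_le_compat_r; [apply Rabs_pos | exact Hu]. }
  assert (Htri : forall u v, Rabs (u + v) <= Rabs u + Rabs v) by apply Rabs_triang.
  pose proof (Hlin e1 A H1). pose proof (Hlin e2 B H2).
  pose proof (Hterm e1 e1 C H1 ltac:(lra)). pose proof (Hterm e1 e2 D H1 ltac:(lra)).
  pose proof (Hterm e2 e2 E H2 ltac:(lra)).
  pose proof (Htri (e1*A + e2*B + e1*e1*C + e1*e2*D) (e2*e2*E)).
  pose proof (Htri (e1*A + e2*B + e1*e1*C) (e1*e2*D)).
  pose proof (Htri (e1*A + e2*B) (e1*e1*C)).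
  pose proof (Htri (e1*A) (e2*B)).
  lra.
Qed.

Lemma resolvent_continuous p q c eta : 0 < eta ->
  exists d, 0 < d /\ forall p' q', Rabs (p' - p) < d -> Rabs (q' - q) < d ->
    Rabs (resolvent p' q' c - resolvent p q c) < eta.
Proof.
  intros Heta.
  set (x := cos c). set (s := sin c).
  set (K := Rabs (2*x*(p*x - q) - 2*s*(x + 1) + 2*s*s*p) + Rabs (-2*(p*x - q) + 2*s*(x + 1))
            + Rabs (x*x + s*s) + Rabs (-2*x) + Rabs 1).
  assert (HK : 0 < K).
  { unfold K. rewrite Rabs_R1.
    pose proof (Rabs_pos (2*x*(p*x - q) - 2*s*(x + 1) + 2*s*s*p)).
    pose proof (Rabs_pos (-2*(p*x - q) + 2*s*(x + 1))).
    pose proof (Rabs_pos (x*x + s*s)). pose proof (Rabs_pos (-2*x)). lra. }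
  exists (Rmin 1 (eta / (2 * K))). split; [apply Rmin_pos; [lra | apply Rdiv_lt_0_compat; lra] |].
  intros p' q' Hp Hq.
  pose proof (Rmin_l 1 (eta / (2 * K))) as Hd1. pose proof (Rmin_r 1 (eta / (2 * K))) as Hd2.
  replace (resolvent p' q' c - resolvent p q c) with
    ((p' - p) * (2*x*(p*x - q) - 2*s*(x + 1) + 2*s*s*p) + (q' - q) * (-2*(p*x - q) + 2*s*(x + 1))
     + (p' - p) * (p' - p) * (x*x + s*s) + (p' - p) * (q' - q) * (-2*x) + (q' - q) * (q' - q) * 1)
    by (unfold resolvent, x, s; ring).
  eapply Rle_lt_trans; [apply quadratic_perturbation; [exact Hd1 | left; exact Hp | left; exact Hq] |].
  fold K. apply (Rmult_le_compat_r K) in Hd2; [| lra].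
  replace (eta / (2 * K) * K) with (eta / 2) in Hd2 by (field; lra). lra.
Qed.

Definition recurrent (a : R -> R) (c : R) : Prop :=
  forall T, exists t, T <= t /\ a t = c.

Lemma band_crossing_recurrent a g w :
  (forall t, 0 < t -> continuity_pt a t) ->
  (forall T, exists s t, Rmax T 1 <= s /\ Rmax T 1 <= t /\ a s <= g /\ g + w <= a t) ->
  forall c, g <= c <= g + w -> recurrent a c.
Proof.
  intros Hc Hcross c Hcb T. destruct (Hcross T) as [s [t [Hs [Ht [Has Hat]]]]].
  pose proof (Rmax_l T 1). pose proof (Rmax_r T 1).
  destruct (Rle_dec s t).
  - destruct (ivt_between a s t c) as [z [Hz Haz]];
      [lra | intros z Hz; apply Hc; lra | left; lra |].
    exists z. split; [lra | exact Haz].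
  - destruct (ivt_between a t s c) as [z [Hz Haz]];
      [lra | intros z Hz; apply Hc; lra | right; lra |].
    exists z. split; [lra | exact Haz].
Qed.

(* A continuous function, bounded on [1, +oo), without a limit at +oo has a
   nontrivial interval of recurrent values: it oscillates by some eps at
   arbitrarily late times, hence crosses one of finitely many bands of width
   eps / 3 covering [-M, M], and by pigeonhole the same band every time. *)
Lemma recurrent_interval a M :
  (forall t, 0 < t -> continuity_pt a t) -> (forall t, 1 <= t -> Rabs (a t) <= M) ->
  ~ (exists l, tends_to a l) -> exists g w, 0 < w /\ forall c, g <= c <= g + w -> recurrent a c.
Proof.
  intros Hc HM Hnl.
  destruct (no_limit_oscillates a Hnl) as [eps [Heps Hosc]].
  set (w := eps / 3).
  destruct (INR_archimed w (2 * M)) as [N HN]; [unfold w; lra |].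
  set (band := fun k : nat => - M + INR k * w).
  set (P := fun k T => exists s t, Rmax T 1 <= s /\ Rmax T 1 <= t /\
                                   a s <= band k /\ band k + w <= a t).
  destruct (pigeonhole_cofinal P (S N)) as [k [_ Hk]].
  - intros k T T' HT [s [t [Hs [Ht Hst]]]]. exists s, t.
    assert (Rmax T' 1 <= Rmax T 1) by (apply Rmax_le_compat; lra).
    repeat split; try lra; apply Hst.
  - intros T. destruct (Hosc (Rmax T 1)) as [s [t [Hs [Ht Hst]]]].
    assert (Has : Rabs (a s) <= M) by (apply HM; eapply Rle_trans; [apply Rmax_r | exact Hs]).
    apply Rabs_le_between in Has.
    destruct (grid_point (- M) w (a s) N) as [k [Hk Hg]]; [unfold w; lra | lra |].
    exists k. split; [exact Hk |]. exists s, t. unfold band, w in *. repeat split; lra.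
  - exists (band k), w. split; [unfold w; lra |].
    apply band_crossing_recurrent; [exact Hc | exact Hk].
Qed.

Lemma recurrent_resolvent_zero a b p q c :
  tends_to (fun t => sin (a t) + sin (b t)) p ->
  tends_to (fun t => sin (b t - a t) - sin (a t)) q ->
  recurrent a c -> resolvent p q c = 0.
Proof.
  intros Hp Hq Hrec. apply Rabs_eq_0, Rle_antisym; [| apply Rabs_pos].
  apply le_epsilon. intros eta Heta. rewrite Rplus_0_l.
  destruct (resolvent_continuous p q c eta Heta) as [d [Hd Hnear]].
  destruct (Hp d Hd) as [T1 HT1]. destruct (Hq d Hd) as [T2 HT2].
  destruct (Hrec (Rmax T1 T2)) as [t [Ht Hat]].
  pose proof (Rmax_l T1 T2). pose proof (Rmax_r T1 T2).
  specialize (Hnear _ _ (HT1 t ltac:(lra)) (HT2 t ltac:(lra))).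
  rewrite <- Hat in Hnear |- *. rewrite resolvent_vanishes, Rminus_0_l, Rabs_Ropp in Hnear. lra.
Qed.

Lemma phase_difference_converges a b p q M :
  (forall t, 0 < t -> continuity_pt a t) -> (forall t, 1 <= t -> Rabs (a t) <= M) ->
  tends_to (fun t => sin (a t) + sin (b t)) p ->
  tends_to (fun t => sin (b t - a t) - sin (a t)) q ->
  exists l, tends_to a l.
Proof.
  intros Hc HM Hp Hq. apply NNPP. intros Hnl.
  destruct (recurrent_interval a M Hc HM Hnl) as [g [w [Hw Hrec]]].
  apply (resolvent_not_vanishing p q g w Hw). intros c Hcb.
  exact (recurrent_resolvent_zero a b p q c Hp Hq (Hrec c Hcb)).
Qed.

(* The angle y0 = arccos ((1 + sqrt 33) / 8) maximises sin y (2 cos y - 1);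
   the constant of the theorem is exactly 3 / (2 sin y0 (2 cos y0 - 1)). *)
Definition y0 : R := acos ((1 + sqrt 33) / 8).

Lemma optimal_angle :
  0 <= y0 /\ 0 < sin y0 /\ 0 < 2 * cos y0 - 1 /\
  sqrt (138 + 22 * sqrt 33) / 4 * (2 / 3 * (sin y0 * (2 * cos y0 - 1))) = 1.
Proof.
  unfold y0. set (r := sqrt 33).
  assert (Hr2 : r * r = 33) by (apply sqrt_sqrt; lra).
  assert (Hr0 : 0 <= r) by apply sqrt_pos.
  assert (Hrb : 5.7 < r < 5.8) by nra.
  set (cs := (1 + r) / 8).
  assert (Hcs : -1 <= cs <= 1) by (unfold cs; lra).
  rewrite cos_acos, sin_acos by exact Hcs.
  set (sn := sqrt (1 - cs²)).
  assert (Hsn2 : sn * sn = 1 - cs * cs)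
    by (unfold sn; rewrite sqrt_sqrt; unfold Rsqr; [ring | unfold cs; nra]).
  assert (Hsn : 0 < sn) by (apply sqrt_lt_R0; unfold Rsqr, cs; nra).
  set (c0 := sqrt (138 + 22 * r) / 4).
  assert (Hc02 : c0 * c0 = (138 + 22 * r) / 16).
  { unfold c0. replace (sqrt (138 + 22 * r) / 4 * (sqrt (138 + 22 * r) / 4))
      with (sqrt (138 + 22 * r) * sqrt (138 + 22 * r) / 16) by field.
    rewrite sqrt_sqrt; lra. }
  assert (Hc0 : 0 <= c0) by (unfold c0; pose proof (sqrt_pos (138 + 22 * r)); lra).
  set (x := c0 * (2 / 3 * (sn * (2 * cs - 1)))).
  assert (Hx2 : x * x = 1).
  { transitivity (c0 * c0 * (4 / 9) * (sn * sn) * (2 * cs - 1)^2); [unfold x; field |].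
    rewrite Hc02, Hsn2. unfold cs.
    transitivity (1 + (r * r - 33) * (-627 + 639 * r - 25 * r^2 - 11 * r^3) / 18432); [field |].
    rewrite Hr2. field. }
  assert (Hx0 : 0 <= x) by (unfold x; apply Rmult_le_pos; [exact Hc0 | unfold cs; nra]).
  repeat split.
  - apply acos_bound.
  - exact Hsn.
  - unfold cs. lra.
  - nra.
Qed.

Lemma threshold_condition D kappa : 0 <= D ->
  sqrt (138 + 22 * sqrt 33) / 4 * D < kappa ->
  D < 2 / 3 * kappa * (sin y0 * (2 * cos y0 - 1)).
Proof.
  intros HD Hk. destruct optimal_angle as [_ [Hs [Hc Hone]]].
  set (m := 2 / 3 * (sin y0 * (2 * cos y0 - 1))) in Hone.
  assert (0 < m) by (unfold m; nra).
  replace D with (sqrt (138 + 22 * sqrt 33) / 4 * m * D) by (rewrite Hone; ring).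
  unfold m in *. nra.
Qed.

Lemma D3_bound (nu : nat -> R) i j : (i < 3)%nat -> (j < 3)%nat -> nu i - nu j <= D3 nu.
Proof.
  intros Hi Hj. unfold D3.
  pose proof (Rmax_l (Rmax (Rabs (nu 0%nat - nu 1%nat)) (Rabs (nu 0%nat - nu 2%nat))) (Rabs (nu 1%nat - nu 2%nat))).
  pose proof (Rmax_r (Rmax (Rabs (nu 0%nat - nu 1%nat)) (Rabs (nu 0%nat - nu 2%nat))) (Rabs (nu 1%nat - nu 2%nat))).
  pose proof (Rmax_l (Rabs (nu 0%nat - nu 1%nat)) (Rabs (nu 0%nat - nu 2%nat))).
  pose proof (Rmax_r (Rabs (nu 0%nat - nu 1%nat)) (Rabs (nu 0%nat - nu 2%nat))).
  pose proof (Rabs_pos (nu 0%nat - nu 1%nat)).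
  pose proof (Rle_abs (nu 0%nat - nu 1%nat)). pose proof (Rle_abs (nu 1%nat - nu 0%nat)).
  pose proof (Rle_abs (nu 0%nat - nu 2%nat)). pose proof (Rle_abs (nu 2%nat - nu 0%nat)).
  pose proof (Rle_abs (nu 1%nat - nu 2%nat)). pose proof (Rle_abs (nu 2%nat - nu 1%nat)).
  rewrite (Rabs_minus_sym (nu 1%nat)), (Rabs_minus_sym (nu 2%nat) (nu 0%nat)),
    (Rabs_minus_sym (nu 2%nat) (nu 1%nat)) in *.
  destruct i as [| [| [| i]]]; destruct j as [| [| [| j]]]; try lia; lra.
Qed.

Lemma coupling_gap xi xj xk h : xi - xj = 2 * h -> 0 <= sin h ->
  (sin (xj - xi) + sin (xk - xi)) - (sin (xi - xj) + sin (xk - xj))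
  <= -2 * sin h * (2 * cos h - 1).
Proof.
  intros Hd Hs.
  replace (xj - xi) with (- (2 * h)) by lra. rewrite sin_neg, Hd, sin_2a.
  set (w := xk - xj - h).
  replace (xk - xi) with (w - h) by (unfold w; lra).
  replace (xk - xj) with (w + h) by (unfold w; lra).
  rewrite sin_minus, sin_plus.
  pose proof (COS_bound w).
  assert (0 <= sin h * (1 + cos w)) by (apply Rmult_le_pos; lra).
  nra.
Qed.

Lemma sin_diag x : sin (x - x) = 0.
Proof. rewrite Rminus_diag. apply sin_0. Qed.

Lemma rhs_difference kappa nu x i j : (i < 3)%nat -> (j < 3)%nat -> i <> j ->
  exists k, (k < 3)%nat /\
    kuramoto3_rhs kappa nu x i - kuramoto3_rhs kappa nu x j =
    nu i - nu j + kappa / 3 * ((sin (x j - x i) + sin (x k - x i)) - (sin (x i - x j) + sin (x k - x j))).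
Proof.
  intros Hi Hj Hij. unfold kuramoto3_rhs.
  destruct i as [| [| [| i]]]; destruct j as [| [| [| j]]]; try lia;
    [exists 2%nat | exists 1%nat | exists 2%nat | exists 0%nat | exists 1%nat | exists 0%nat];
    (split; [lia |]); rewrite !sin_diag; ring.
Qed.

Lemma rhs_in_differences kappa nu x : let a := x 1%nat - x 0%nat in let b := x 2%nat - x 0%nat in
  kuramoto3_rhs kappa nu x 0 = nu 0%nat + kappa / 3 * (sin a + sin b) /\
  kuramoto3_rhs kappa nu x 1 = nu 1%nat + kappa / 3 * (sin (b - a) - sin a) /\
  kuramoto3_rhs kappa nu x 2 = nu 2%nat + kappa / 3 * (sin (a - b) - sin b).
Proof.
  intros a b. unfold kuramoto3_rhs, a, b. rewrite !sin_diag.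
  replace (x 0%nat - x 1%nat) with (- (x 1%nat - x 0%nat)) by ring.
  replace (x 0%nat - x 2%nat) with (- (x 2%nat - x 0%nat)) by ring.
  replace (x 2%nat - x 0%nat - (x 1%nat - x 0%nat)) with (x 2%nat - x 1%nat) by ring.
  replace (x 1%nat - x 0%nat - (x 2%nat - x 0%nat)) with (x 1%nat - x 2%nat) by ring.
  replace (x 1%nat - x 2%nat) with (- (x 2%nat - x 1%nat)) by ring.
  rewrite !sin_neg. repeat split; ring.
Qed.

Lemma sin_lipschitz x y : Rabs (sin x - sin y) <= Rabs (x - y).
Proof.
  destruct (MVT_gen sin y x cos) as [c [_ Hc]].
  - intros; auto_derive; [exact I | ring].
  - intros; apply continuity_sin.
  - rewrite Hc, Rabs_mult. pose proof (COS_bound c).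
    assert (Rabs (cos c) <= 1) by (apply Rabs_le; lra).
    pose proof (Rabs_pos (x - y)). nra.
Qed.

Lemma rhs_bound kappa nu x i : 0 <= kappa ->
  Rabs (kuramoto3_rhs kappa nu x i) <= Rabs (nu i) + kappa.
Proof.
  intros Hk. unfold kuramoto3_rhs.
  pose proof (SIN_bound (x 0%nat - x i)). pose proof (SIN_bound (x 1%nat - x i)).
  pose proof (SIN_bound (x 2%nat - x i)).
  eapply Rle_trans; [apply Rabs_triang |]. rewrite Rabs_mult, (Rabs_right (kappa / 3)) by lra.
  assert (Rabs (sin (x 0%nat - x i) + sin (x 1%nat - x i) + sin (x 2%nat - x i)) <= 3)
    by (apply Rabs_le; lra).
  nra.
Qed.

Lemma rhs_lipschitz kappa nu x y i K : 0 <= kappa -> (i < 3)%nat ->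
  (forall l, (l < 3)%nat -> Rabs (x l - y l) <= K) ->
  Rabs (kuramoto3_rhs kappa nu x i - kuramoto3_rhs kappa nu y i) <= 2 * kappa * K.
Proof.
  intros Hk Hi HK.
  assert (Hterm : forall l, (l < 3)%nat -> Rabs (sin (x l - x i) - sin (y l - y i)) <= 2 * K).
  { intros l Hl. eapply Rle_trans; [apply sin_lipschitz |].
    replace (x l - x i - (y l - y i)) with ((x l - y l) + - (x i - y i)) by ring.
    eapply Rle_trans; [apply Rabs_triang |]. rewrite Rabs_Ropp.
    pose proof (HK l Hl). pose proof (HK i Hi). lra. }
  pose proof (Hterm 0%nat ltac:(lia)). pose proof (Hterm 1%nat ltac:(lia)).
  pose proof (Hterm 2%nat ltac:(lia)).
  unfold kuramoto3_rhs.
  set (d0 := sin (x 0%nat - x i) - sin (y 0%nat - y i)) in *.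
  set (d1 := sin (x 1%nat - x i) - sin (y 1%nat - y i)) in *.
  set (d2 := sin (x 2%nat - x i) - sin (y 2%nat - y i)) in *.
  replace (nu i + kappa / 3 * (sin (x 0%nat - x i) + sin (x 1%nat - x i) + sin (x 2%nat - x i)) -
           (nu i + kappa / 3 * (sin (y 0%nat - y i) + sin (y 1%nat - y i) + sin (y 2%nat - y i))))
    with (kappa / 3 * (d0 + d1 + d2)) by (unfold d0, d1, d2; ring).
  rewrite Rabs_mult, (Rabs_right (kappa / 3)) by lra.
  pose proof (Rabs_triang (d0 + d1) d2). pose proof (Rabs_triang d0 d1).
  nra.
Qed.

Definition mean_frequency (nu : nat -> R) : R := (nu 0%nat + nu 1%nat + nu 2%nat) / 3.

Lemma locking_from_reference (theta : nat -> R -> R) :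
  (exists l, tends_to (fun t => theta 1%nat t - theta 0%nat t) l) ->
  (exists l, tends_to (fun t => theta 2%nat t - theta 0%nat t) l) ->
  complete_phase_locking theta.
Proof.
  intros [la Ha] [lb Hb].
  assert (Href : forall i, (i < 3)%nat -> exists l, tends_to (fun t => theta i t - theta 0%nat t) l).
  { intros [| [| [| i]]] Hi; [| exists la; exact Ha | exists lb; exact Hb | lia].
    exists 0. apply (tends_to_ext (fun _ => 0)); [intros; ring | apply tends_to_const]. }
  intros i j Hi Hj. destruct (Href i Hi) as [li Hli]. destruct (Href j Hj) as [lj Hlj].
  exists (li - lj). apply tends_to_is_lim.
  apply (tends_to_ext (fun t => (theta i t - theta 0%nat t) - (theta j t - theta 0%nat t)));
    [intros; ring | apply tends_to_minus; assumption].
Qed.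

Section Kuramoto.

Variables (kappa : R) (nu : nat -> R) (theta : nat -> R -> R).
Hypothesis kappa_pos : 0 < kappa.

Definition omega (i : nat) (t : R) : R := kuramoto3_rhs kappa nu (fun j => theta j t) i.

Hypothesis theta_deriv :
  forall i t, (i < 3)%nat -> 0 < t -> is_derive (theta i) t (omega i t).

Lemma phase_continuity i t : (i < 3)%nat -> 0 < t -> continuity_pt (theta i) t.
Proof. intros Hi Ht. exact (derive_continuity_pt _ _ _ (theta_deriv i t Hi Ht)). Qed.

(* Stage 1: if every frequency gap is below (2/3) kappa sin y (2 cos y - 1)
   with sin y > 0, the phase differences stay bounded: take h = y + 2 n pi
   above all initial differences; at the level theta_i - theta_j = 2 h the
   difference decreases (coupling_gap), so it never reaches 2 h. *)
Lemma bounded_differences y : 0 <= y -> 0 < sin y ->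
  (forall i j, (i < 3)%nat -> (j < 3)%nat -> nu i - nu j < 2 / 3 * kappa * (sin y * (2 * cos y - 1))) ->
  exists L, forall i j t, (i < 3)%nat -> (j < 3)%nat -> 1 <= t -> theta i t - theta j t < L.
Proof.
  intros Hy Hsy Hgap.
  set (B := Rabs (theta 0%nat 1) + Rabs (theta 1%nat 1) + Rabs (theta 2%nat 1)).
  assert (HB : forall i, (i < 3)%nat -> Rabs (theta i 1) <= B).
  { pose proof (Rabs_pos (theta 0%nat 1)). pose proof (Rabs_pos (theta 1%nat 1)).
    pose proof (Rabs_pos (theta 2%nat 1)). intros [| [| [| i]]] Hi; unfold B; lia || lra. }
  destruct (INR_archimed (2 * PI) B) as [n Hn]; [pose proof PI_RGT_0; lra |].
  set (h := y + 2 * INR n * PI).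
  assert (Hh : B < h) by (unfold h; lra).
  exists (2 * h). intros i j t Hi Hj Ht.
  destruct (Nat.eq_dec i j) as [<- | Hij].
  { rewrite Rminus_diag. pose proof (HB 0%nat ltac:(lia)). pose proof (Rabs_pos (theta 0%nat 1)). lra. }
  apply (barrier (fun t => theta i t - theta j t) (fun t => omega i t - omega j t)); [| | | exact Ht].
  - intros s Hs. apply (is_derive_minus (theta i) (theta j)); apply theta_deriv; assumption.
  - pose proof (HB i Hi). pose proof (HB j Hj).
    pose proof (Rle_abs (theta i 1)). pose proof (Rle_abs (- theta j 1)). rewrite Rabs_Ropp in *. lra.
  - intros s Hs Hlevel.
    destruct (rhs_difference kappa nu (fun l => theta l s) i j Hi Hj Hij) as [k [Hk Hdiff]].
    unfold omega. rewrite Hdiff.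
    pose proof (coupling_gap (theta i s) (theta j s) (theta k s) h Hlevel) as Hc.
    unfold h in Hc. rewrite sin_period, cos_period in Hc.
    specialize (Hc (Rlt_le _ _ Hsy)). specialize (Hgap i j Hi Hj). nra.
Qed.

(* Stage 2: the system is a gradient flow of the potential V, which
   decreases at rate sum_i (omega_i - mean frequency)^2. *)
Let nbar := mean_frequency nu.

Definition potential (t : R) : R :=
  - (nu 1%nat - nbar) * (theta 1%nat t - theta 0%nat t) - (nu 2%nat - nbar) * (theta 2%nat t - theta 0%nat t)
  - kappa / 3 * (cos (theta 1%nat t - theta 0%nat t) + cos (theta 2%nat t - theta 0%nat t)
                 + cos (theta 2%nat t - theta 1%nat t)).

Definition dissipation (t : R) : R :=
  (omega 0 t - nbar)^2 + (omega 1 t - nbar)^2 + (omega 2 t - nbar)^2.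

Lemma potential_deriv t : 0 < t -> is_derive potential t (- dissipation t).
Proof.
  intros Ht. unfold potential.
  pose proof (theta_deriv 0%nat t ltac:(lia) Ht) as D0.
  pose proof (theta_deriv 1%nat t ltac:(lia) Ht) as D1.
  pose proof (theta_deriv 2%nat t ltac:(lia) Ht) as D2.
  auto_derive; [repeat split; eexists; eauto |].
  replace (Derive (fun x => theta 0%nat x) t) with (omega 0 t) by (symmetry; apply is_derive_unique, D0).
  replace (Derive (fun x => theta 1%nat x) t) with (omega 1 t) by (symmetry; apply is_derive_unique, D1).
  replace (Derive (fun x => theta 2%nat x) t) with (omega 2 t) by (symmetry; apply is_derive_unique, D2).
  unfold dissipation, omega, nbar, mean_frequency, kuramoto3_rhs. rewrite !sin_diag.
  replace (theta 0%nat t - theta 1%nat t) with (- (theta 1%nat t + - theta 0%nat t)) by ring.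
  replace (theta 0%nat t - theta 2%nat t) with (- (theta 2%nat t + - theta 0%nat t)) by ring.
  replace (theta 1%nat t - theta 2%nat t) with (- (theta 2%nat t + - theta 1%nat t)) by ring.
  replace (theta 1%nat t - theta 0%nat t) with (theta 1%nat t + - theta 0%nat t) by ring.
  replace (theta 2%nat t - theta 0%nat t) with (theta 2%nat t + - theta 0%nat t) by ring.
  replace (theta 2%nat t - theta 1%nat t) with (theta 2%nat t + - theta 1%nat t) by ring.
  rewrite !sin_neg. field.
Qed.

Lemma potential_decreasing s t : 0 < s -> s <= t -> potential t <= potential s.
Proof.
  intros Hs Hst.
  destruct (mvt_pos potential (fun u => - dissipation u) s t Hs Hst potential_deriv) as [c [_ Heq]].
  assert (0 <= dissipation c).
  { unfold dissipation. pose proof (pow2_ge_0 (omega 0 c - nbar)).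
    pose proof (pow2_ge_0 (omega 1 c - nbar)). pose proof (pow2_ge_0 (omega 2 c - nbar)). lra. }
  nra.
Qed.

Let C := Rabs (nu 0%nat) + Rabs (nu 1%nat) + Rabs (nu 2%nat) + kappa.

Lemma C_nonneg : 0 <= C.
Proof.
  unfold C. pose proof (Rabs_pos (nu 0%nat)). pose proof (Rabs_pos (nu 1%nat)).
  pose proof (Rabs_pos (nu 2%nat)). lra.
Qed.

Lemma omega_bound i t : (i < 3)%nat -> Rabs (omega i t) <= C.
Proof.
  intros Hi. unfold omega. eapply Rle_trans; [apply rhs_bound; lra |].
  unfold C. pose proof (Rabs_pos (nu 0%nat)). pose proof (Rabs_pos (nu 1%nat)).
  pose proof (Rabs_pos (nu 2%nat)). destruct i as [| [| [| i]]]; lia || lra.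
Qed.

Lemma phase_lipschitz i s t : (i < 3)%nat -> 0 < s -> 0 < t ->
  Rabs (theta i t - theta i s) <= C * Rabs (t - s).
Proof.
  intros Hi Hs Ht.
  assert (Hmin : 0 < Rmin s t) by (apply Rmin_pos; lra).
  destruct (MVT_gen (theta i) s t (omega i)) as [c [Hc Heq]].
  - intros x Hx. apply theta_deriv; [exact Hi | lra].
  - intros x Hx. apply phase_continuity; [exact Hi | lra].
  - rewrite Heq, Rabs_mult. apply Rmult_le_compat_r; [apply Rabs_pos | apply omega_bound, Hi].
Qed.

Lemma omega_lipschitz i s t : (i < 3)%nat -> 0 < s -> 0 < t ->
  Rabs (omega i t - omega i s) <= 2 * kappa * C * Rabs (t - s).
Proof.
  intros Hi Hs Ht. rewrite Rmult_assoc. unfold omega.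
  apply rhs_lipschitz; [lra | exact Hi |]. intros l Hl. apply phase_lipschitz; assumption.
Qed.

(* A frequency deviating from the mean by eps at time t stays eps/2 away on
   [t, t + h] for h = eps / (2 (2 kappa C + 1)), so the potential drops by at
   least h (eps/2)^2 over that interval. *)
Lemma potential_drop i eps t : (i < 3)%nat -> 0 < eps -> 0 < t -> eps <= Rabs (omega i t - nbar) ->
  potential (t + eps / (2 * (2 * kappa * C + 1)))
  <= potential t - eps / (2 * (2 * kappa * C + 1)) * (eps / 2)^2.
Proof.
  intros Hi Heps Ht Hdev.
  pose proof C_nonneg.
  set (K := 2 * kappa * C + 1). assert (HK : 0 < K) by (unfold K; nra).
  set (h := eps / (2 * K)). assert (Hh : 0 < h) by (unfold h; apply Rdiv_lt_0_compat; lra).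
  destruct (mvt_pos potential (fun u => - dissipation u) t (t + h)) as [c [Hc Heq]];
    [lra | lra | exact potential_deriv |].
  assert (Hclose : Rabs (omega i c - omega i t) <= eps / 2).
  { eapply Rle_trans; [apply omega_lipschitz; [exact Hi | lra | lra] |]. rewrite Rabs_right by lra.
    assert (Hkh : K * h = eps / 2) by (unfold h; field; lra).
    assert (2 * kappa * C * (c - t) <= 2 * kappa * C * h) by (apply Rmult_le_compat_l; nra).
    unfold K in Hkh. nra. }
  assert (Hfar : eps / 2 <= Rabs (omega i c - nbar)).
  { pose proof (Rabs_triang (omega i t - omega i c) (omega i c - nbar)).
    rewrite Rabs_minus_sym in Hclose.
    replace (omega i t - omega i c + (omega i c - nbar)) with (omega i t - nbar) in * by ring. lra. }
  assert (Hsq : (eps / 2)^2 <= (omega i c - nbar)^2).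
  { rewrite <- !Rsqr_pow2. apply Rsqr_le_abs_1. rewrite (Rabs_right (eps / 2)); lra. }
  assert (Hdiss : (eps / 2)^2 <= dissipation c).
  { unfold dissipation. pose proof (pow2_ge_0 (omega 0 c - nbar)).
    pose proof (pow2_ge_0 (omega 1 c - nbar)). pose proof (pow2_ge_0 (omega 2 c - nbar)).
    destruct i as [| [| [| i]]]; lia || lra. }
  replace (t + h - t) with h in Heq by ring. nra.
Qed.

Variable L : R.
Hypothesis differences_bounded :
  forall i j t, (i < 3)%nat -> (j < 3)%nat -> 1 <= t -> theta i t - theta j t < L.

Lemma difference_abs_bound i j t : (i < 3)%nat -> (j < 3)%nat -> 1 <= t ->
  Rabs (theta i t - theta j t) <= L.
Proof.
  intros Hi Hj Ht. pose proof (differences_bounded i j t Hi Hj Ht).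
  pose proof (differences_bounded j i t Hj Hi Ht). apply Rabs_le. lra.
Qed.

Lemma potential_lower_bound : exists Vmin, forall t, 1 <= t -> Vmin <= potential t.
Proof.
  exists (- (Rabs (nu 1%nat - nbar) * L + Rabs (nu 2%nat - nbar) * L + kappa)).
  intros t Ht. unfold potential.
  assert (Hprod : forall u v, Rabs v <= L -> u * v <= Rabs u * L).
  { intros u v Hv. eapply Rle_trans; [apply Rle_abs |]. rewrite Rabs_mult.
    apply Rmult_le_compat_l; [apply Rabs_pos | exact Hv]. }
  pose proof (Hprod (nu 1%nat - nbar) _ (difference_abs_bound 1 0 t ltac:(lia) ltac:(lia) Ht)).
  pose proof (Hprod (nu 2%nat - nbar) _ (difference_abs_bound 2 0 t ltac:(lia) ltac:(lia) Ht)).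
  pose proof (COS_bound (theta 1%nat t - theta 0%nat t)).
  pose proof (COS_bound (theta 2%nat t - theta 0%nat t)).
  pose proof (COS_bound (theta 2%nat t - theta 1%nat t)).
  nra.
Qed.

(* Frequency synchronisation: a deviation at arbitrarily late times would
   make the potential drop by a fixed amount infinitely often, contradicting
   its lower bound. *)
Lemma frequency_sync i : (i < 3)%nat -> tends_to (omega i) nbar.
Proof.
  intros Hi. apply NNPP. intros Hnot.
  destruct (not_tends_to_deviates _ _ Hnot) as [eps [Heps Hdev]].
  set (h := eps / (2 * (2 * kappa * C + 1))).
  set (del := h * (eps / 2)^2).
  assert (Hh : 0 < h) by (pose proof C_nonneg; unfold h; apply Rdiv_lt_0_compat; nra).
  assert (Hdel : 0 < del) by (unfold del; apply Rmult_lt_0_compat; [exact Hh | apply pow_lt; lra]).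
  assert (Hiter : forall N : nat, exists t, 1 <= t /\ potential t <= potential 1 - INR N * del).
  { induction N as [| N [t [Ht HV]]]; [exists 1; simpl; split; lra |].
    destruct (Hdev t) as [s [Hs Hbig]].
    exists (s + h). split; [lra |].
    pose proof (potential_drop i eps s Hi Heps ltac:(lra) Hbig) as Hdrop.
    fold h in Hdrop. fold del in Hdrop.
    pose proof (potential_decreasing t s ltac:(lra) Hs).
    rewrite S_INR. lra. }
  destruct potential_lower_bound as [Vmin HVmin].
  destruct (INR_archimed del (potential 1 - Vmin)) as [N HN]; [exact Hdel |].
  destruct (Hiter N) as [t [Ht HV]].
  pose proof (HVmin t Ht). lra.
Qed.

(* Stage 3: the limits of the frequencies give sin a + sin b -> p and
   sin (b - a) - sin a -> q for a = theta1 - theta0, b = theta2 - theta0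
   (and symmetrically with a and b swapped), so both differences converge. *)
Lemma phase_locking : complete_phase_locking theta.
Proof.
  set (a := fun t => theta 1%nat t - theta 0%nat t).
  set (b := fun t => theta 2%nat t - theta 0%nat t).
  assert (Hsines : forall i (p : R -> R), (i < 3)%nat ->
            (forall t, omega i t = nu i + kappa / 3 * p t) -> tends_to p (3 / kappa * (nbar - nu i))).
  { intros i p Hi Hp. apply (tends_to_ext (fun t => 3 / kappa * omega i t + - (3 / kappa) * nu i)).
    - intros t _. rewrite Hp. field. lra.
    - replace (3 / kappa * (nbar - nu i)) with (3 / kappa * nbar + - (3 / kappa) * nu i) by ring.
      apply tends_to_affine, frequency_sync, Hi. }
  assert (S0 : tends_to (fun t => sin (a t) + sin (b t)) (3 / kappa * (nbar - nu 0%nat))).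
  { apply Hsines; [lia |]. intros t. apply (rhs_in_differences kappa nu (fun j => theta j t)). }
  assert (S1 : tends_to (fun t => sin (b t - a t) - sin (a t)) (3 / kappa * (nbar - nu 1%nat))).
  { apply Hsines; [lia |]. intros t. apply (rhs_in_differences kappa nu (fun j => theta j t)). }
  assert (S2 : tends_to (fun t => sin (a t - b t) - sin (b t)) (3 / kappa * (nbar - nu 2%nat))).
  { apply Hsines; [lia |]. intros t. apply (rhs_in_differences kappa nu (fun j => theta j t)). }
  assert (S0' : tends_to (fun t => sin (b t) + sin (a t)) (3 / kappa * (nbar - nu 0%nat)))
    by (apply (tends_to_ext (fun t => sin (a t) + sin (b t))); [intros; ring | exact S0]).
  apply locking_from_reference.
  - eapply (phase_difference_converges a b _ _ L); [| | exact S0 | exact S1].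
    + intros t Ht. apply continuity_pt_minus; apply phase_continuity; lia || lra.
    + intros t Ht. apply difference_abs_bound; lia || lra.
  - eapply (phase_difference_converges b a _ _ L); [| | exact S0' | exact S2].
    + intros t Ht. apply continuity_pt_minus; apply phase_continuity; lia || lra.
    + intros t Ht. apply difference_abs_bound; lia || lra.
Qed.

End Kuramoto.

Theorem proposition4p1 (kappa : R) (nu : nat -> R) :
  sqrt (138 + 22 * sqrt 33) / 4 * D3 nu < kappa ->
  forall (Theta0 : nat -> R) (theta : nat -> R -> R),
    kuramoto3_solution kappa nu Theta0 theta ->
    complete_phase_locking theta.
Proof.
  intros Hk Theta0 theta [_ [_ Hsol]].
  destruct optimal_angle as [Hy [Hsy [Hcy _]]].
  assert (HD0 : 0 <= D3 nu) by (pose proof (D3_bound nu 0 0 ltac:(lia) ltac:(lia)); lra).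
  pose proof (threshold_condition (D3 nu) kappa HD0 Hk) as Hgap.
  assert (Hkpos : 0 < kappa).
  { assert (0 < sin y0 * (2 * cos y0 - 1)) by (apply Rmult_lt_0_compat; assumption). nra. }
  assert (Hgaps : forall i j, (i < 3)%nat -> (j < 3)%nat ->
                    nu i - nu j < 2 / 3 * kappa * (sin y0 * (2 * cos y0 - 1)))
    by (intros i j Hi Hj; pose proof (D3_bound nu i j Hi Hj); lra).
  destruct (bounded_differences kappa nu theta Hkpos Hsol y0 Hy Hsy Hgaps) as [L HL].
  exact (phase_locking kappa nu theta Hkpos Hsol L HL).
Qed.
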